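(* Let $t\neq|$ be a tree of $\mathcal{A}$ such that $\Delta(t)=|\otimes t+t\otimes|$. Then $t$ is a corolla, i.e. its only internal vertex is the root vertex.
   Context: Trees: planar rooted trees in which every internal vertex has at least two children; the root vertex hangs from a trunk edge; leaves are edges without upper vertex; $|$ is the tree with one leaf and no internal vertex. $\mathcal{A}$ is the vector space over a field $\mathbb K$ with basis all such trees, with its tridendriform products (Loday–Ronco free tridendriform algebra on $Y=|\vee|$; $x_0\vee\cdots\vee x_k$ grafts trees on a new root; for $x=x^{(0)}\vee\cdots\vee x^{(k)}$, $y=y^{(0)}\vee\cdots\vee y^{(l)}$: $x\prec y=x^{(0)}\vee\cdots\vee x^{(k-1)}\vee(x^{(k)}*y)$, $x\cdot y=x^{(0)}\vee\cdots\vee x^{(k-1)}\vee(x^{(k)}*y^{(0)})\vee y^{(1)}\vee\cdots\vee y^{(l)}$, $x\succ y=(x*y^{(0)})\vee y^{(1)}\vee\cdots\vee y^{(l)}$, $*=\prec+\cdot+\succ$, $|*z=z*|=z$). $\Delta$ is the coproduct $\Delta(|)=|\otimes|$, $\Delta(t)=\sum_{c}G^c(t)\otimes P^c(t)$ over admissible cuts $c$ of $t$: an internal edge joins two internal vertices; a cut is a nonempty set of internal edges, plus the empty cut and the total cut (below the root); admissible means every root-to-leaf path meets at most one chosen edge. Removing the edges gives $P^c(t)$ (the component containing the root) and trees $G^c_1(t),\dots,G^c_m(t)$ from left to right, $G^c(t)=G^c_1(t)*\cdots*G^c_m(t)$; empty cut: $P^c=t$, $G^c=|$; total cut: $P^c=|$,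 $G^c=t$. *)

From HB Require Import structures.
From Stdlib Require List.
From mathcomp Require Import all_boot all_algebra.
Set Implicit Arguments. Unset Strict Implicit. Unset Printing Implicit Defensive.
Import GRing.Theory.

(* Planar rooted trees.  [Node l] is a vertex whose children (left to right)
   are the trees of [l]; [Node [::]] is the tree | (a single leaf, no internal
   vertex).  A tree [Node l] with [l <> [::]] has root vertex of arity
   [size l]; a child equal to [Leaf] is a leaf edge. *)
Inductive tree : Type := Node of seq tree.

Definition Leaf : tree := Node [::].

Definition children (t : tree) : seq tree := let: Node l := t in l.

Fixpoint tree_ind' (P : tree -> Prop)
  (H : forall l, (forall x, Stdlib.Lists.List.In x l -> P x) -> P (Node l)) (t : tree) : P t :=
  match t with
  | Node l => H l ((fix go (l : seq tree) : forall x, Stdlib.Lists.List.In x l -> P x :=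
                    match l with
                    | [::] => fun x (hx : Stdlib.Lists.List.In x [::]) => False_ind _ hx
                    | a :: r => fun x hx =>
                        match hx with
                        | or_introl e => eq_ind a P (tree_ind' H a) x e
                        | or_intror h => go r x h
                        end
                    end) l)
  end.

Fixpoint tree_eqb (x y : tree) : bool :=
  match x, y with
  | Node l1, Node l2 =>
      (fix aux (l1 l2 : seq tree) : bool :=
         match l1, l2 with
         | [::], [::] => true
         | a :: r, b :: s => tree_eqb a b && aux r s
         | _, _ => false
         end) l1 l2
  end.

Lemma tree_eqb_iff (x y : tree) : tree_eqb x y <-> x = y.
Proof.
elim/tree_ind': x y => l IH [l'] /=.
elim: l l' IH => [|a r IHr] [|b s] IH /=; try by split.
have /IH ha : Stdlib.Lists.List.In a (a :: r) by left.
have IH' : forall x, Stdlib.Lists.List.In x r ->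
    forall y, tree_eqb x y <-> x = y.
  by move=> x hx; apply: IH; right.
split.
  case/andP=> h1 h2.
  have e1 := (ha b).1 h1; have e2 := (IHr s IH').1 h2.
  by case: e2 => ->; rewrite e1.
case=> e1 e2; apply/andP; split; first exact: (ha b).2.
by apply: (IHr s IH').2; rewrite e2.
Qed.

Lemma tree_eqbP : Equality.axiom tree_eqb.
Proof. move=> x y; apply: (iffP idP) => h; [exact: (tree_eqb_iff x y).1 | exact: (tree_eqb_iff x y).2]. Qed.

HB.instance Definition _ := hasDecEq.Build tree tree_eqbP.

Fixpoint valid (t : tree) : bool :=
  let: Node l := t in (nilp l || (2 <= size l)) && all valid l.

Fixpoint tsize (t : tree) : nat :=
  let: Node l := t in (sumn (map tsize l)).+1.

(* Tridendriform total product  x * y = x < y + x . y + x > y,  returned as a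
   formal sum of trees (a list, multiplicities = repetitions).  The fuel is
   always sufficient when started at tsize x + tsize y (each recursive call
   decreases the total size). *)
Fixpoint mulf (n : nat) (x y : tree) : seq tree :=
  match n with
  | 0 => [::]
  | n'.+1 =>
    match x, y with
    | Node [::], _ => [:: y]
    | _, Node [::] => [:: x]
    | Node (x0 :: xr), Node (y0 :: yr) =>
        let init := belast x0 xr in
        let xk := last x0 xr in
           [seq Node (rcons init z) | z <- mulf n' xk y]
        ++ [seq Node (init ++ z :: yr) | z <- mulf n' xk y0]
        ++ [seq Node (z :: yr) | z <- mulf n' x y0]
    end
  end.

Definition tmul (x y : tree) : seq tree := mulf (tsize x + tsize y) x y.

Definition mulS (a b : seq tree) : seq tree :=
  flatten [seq tmul x y | x <- a, y <- b].

Definition Gprod (gs : seq tree) : seq tree :=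
  foldr (fun g acc => mulS [:: g] acc) [:: Leaf] gs.

(* [sub t] enumerates, each exactly once, the admissible sets of internal
   edges of t lying above the root vertex (including the empty set), as pairs
   (list of the cut-off trees G_1..G_m from left to right, the root part P).
   Cutting an internal edge leaves that edge as a leaf of P and as the trunk
   of the cut-off tree. *)
Fixpoint sub (t : tree) : seq (seq tree * tree) :=
  let: Node l := t in
  [seq (gp.1, Node gp.2) | gp <-
    (fix go (l : seq tree) : seq (seq tree * seq tree) :=
       match l with
       | [::] => [:: ([::], [::])]
       | c :: r =>
           [seq (a.1 ++ b.1, a.2 :: b.2)
              | a <- (if nilp (children c) then [::] else [:: ([:: c], Leaf)])
                     ++ sub c,
                b <- go r]
       end) l].

(* all admissible cuts of t: for t = |, only the cut giving | (x) |;
   otherwise the cuts above the root (incl. the empty cut) and the total cut *)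
Definition cuts (t : tree) : seq (seq tree * tree) :=
  if t == Leaf then [:: ([::], Leaf)] else sub t ++ [:: ([:: t], Leaf)].

(* coefficient of the basis element u (x) v of A (x) A in Delta(t) =
   sum_c G^c(t) (x) P^c(t) *)
Definition delta_coef (K : fieldType) (t u v : tree) : K :=
  \sum_(c <- cuts t) ((count_mem u (Gprod c.1))%:R * (c.2 == v)%:R).

Definition is_corolla (t : tree) : Prop :=
  exists l : seq tree, t = Node l /\ l <> [::] /\ all (fun c => c == Leaf) l.

(* If some child c of the root is not a leaf, cutting the edge above c gives
   G = c and P = t with c replaced by a leaf.  The root part P of an admissible
   cut determines the cut (the cut edges are exactly the new leaves of P), so
   the coefficient of c (x) P in Delta(t) is 1, whereas it is 0 in
   | (x) t + t (x) |. *)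

From mathcomp Require Import all_boot all_algebra.
Import GRing.Theory.
Local Open Scope ring_scope.

Lemma big_uniq_key {R : Type} {idx : R} {op : Monoid.com_law idx} {T K : eqType}
    (f : T -> K) (s : seq T) (x : T) (F : T -> R) :
  uniq (map f s) -> x \in s ->
  \big[op/idx]_(y <- s | f y == f x) F y = F x.
Proof.
move=> uniq_fs xs; rewrite (big_rem _ xs) eqxx big1_seq ?Monoid.mulm1 // => y /andP[/eqP fyx yr].
have := perm_uniq (perm_map f (perm_to_rem xs)); rewrite uniq_fs /= => /esym/andP[].
by rewrite -fyx map_f.
Qed.

Definition sub_child (c : tree) : seq (seq tree * tree) :=
  if c == Leaf then sub c else ([:: c], Leaf) :: sub c.

Fixpoint sub_forest (l : seq tree) : seq (seq tree * seq tree) :=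
  if l is c :: r then [seq (a.1 ++ b.1, a.2 :: b.2) | a <- sub_child c, b <- sub_forest r]
  else [:: ([::], [::])].

Lemma sub_Node l : sub (Node l) = [seq (gp.1, Node gp.2) | gp <- sub_forest l].
Proof. by congr map; elim: l => //= c r ->; case: c => -[]. Qed.

Lemma size_sub_forest l gp : gp \in sub_forest l -> size gp.2 = size l.
Proof.
elim: l gp => [|c r IHr] gp /=; first by rewrite inE => /eqP ->.
by case/allpairsP => -[a b] [_ /IHr + ->] /= => ->.
Qed.

Lemma Leaf_notin_sub_roots t : t != Leaf -> Leaf \notin map snd (sub t).
Proof.
case: t => -[|c l] // _; rewrite sub_Node -map_comp.
by apply/mapP => -[gp /size_sub_forest + [/(congr1 size)]] /= => ->.
Qed.

Lemma sub_roots_uniq t : uniq (map snd (sub t)).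
Proof.
elim/tree_ind': t => l IH; rewrite sub_Node -map_comp (map_comp Node snd).
rewrite map_inj_uniq; last by move=> x y [].
elim: l IH => //= c r IHr IH.
have -> : map snd (sub_forest (c :: r)) =
    [seq x :: y | x <- map snd (sub_child c), y <- map snd (sub_forest r)].
  by rewrite map_allpairs allpairs_mapl allpairs_mapr.
have uniq_c : uniq (map snd (sub c)) by apply: IH; left.
have uniq_r : uniq (map snd (sub_forest r)) by apply: IHr => x hx; apply: IH; right.
rewrite allpairs_uniq // => [|[x1 y1] [x2 y2] _ _ [-> ->] //].
rewrite /sub_child; case: eqP => // /eqP c_nLeaf.
by rewrite /= uniq_c Leaf_notin_sub_roots.
Qed.

Lemma cuts_roots_uniq t : uniq (map snd (cuts t)).
Proof.
rewrite /cuts; case: eqP => // /eqP t_nLeaf.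
by rewrite map_cat cat_uniq sub_roots_uniq /= orbF andbT Leaf_notin_sub_roots.
Qed.

Lemma sub_sub_child c : {subset sub c <= sub_child c}.
Proof. by rewrite /sub_child => e e_sub; case: ifP => // _; rewrite inE e_sub orbT. Qed.

Lemma empty_cut_mem_sub t : ([::], t) \in sub t.
Proof.
elim/tree_ind': t => l IH; rewrite sub_Node.
apply/mapP; exists ([::], l) => //; elim: l IH => //= c r IHr IH.
apply/allpairsP; exists (([::], c), ([::], r)); split => //=.
- by apply/sub_sub_child/IH; left.
- by apply: IHr => x hx; apply: IH; right.
Qed.

Lemma empty_cut_mem_sub_forest l : ([::], l) \in sub_forest l.
Proof.
have := empty_cut_mem_sub (Node l); rewrite sub_Node => /mapP[[g p] gp_in [g_nil l_p]].
by rewrite g_nil {1}l_p.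
Qed.

Lemma prune_cut_mem_sub pre c post : c != Leaf ->
  ([:: c], Node (pre ++ Leaf :: post)) \in sub (Node (pre ++ c :: post)).
Proof.
move=> c_nLeaf; rewrite sub_Node; apply/mapP.
exists ([:: c], pre ++ Leaf :: post) => //; elim: pre => [|x pre IH] /=.
  apply/allpairsP; exists (([:: c], Leaf), ([::], post)); split => //=.
    by rewrite /sub_child (negbTE c_nLeaf) mem_head.
  exact: empty_cut_mem_sub_forest.
apply/allpairsP; exists (([::], x), ([:: c], pre ++ Leaf :: post)); split => //=.
exact/sub_sub_child/empty_cut_mem_sub.
Qed.

Lemma Gprod1 c : Gprod [:: c] = [:: c].
Proof. by rewrite /Gprod /= /mulS /tmul /= addn1 /=; case: c => -[|? ?]. Qed.

Lemma delta_coef_cut (K : fieldType) t e u : e \in cuts t ->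
  delta_coef K t u e.2 = (count_mem u (Gprod e.1))%:R.
Proof.
move=> e_cut; rewrite /delta_coef.
transitivity (\sum_(e' <- cuts t | e'.2 == e.2) (count_mem u (Gprod e'.1))%:R : K).
  by rewrite [RHS]big_mkcond; apply: eq_bigr => e' _; case: eqP; rewrite ?mulr1 ?mulr0.
exact: big_uniq_key (cuts_roots_uniq t) e_cut.
Qed.

Lemma valid_prune {pre c post} :
  valid (Node (pre ++ c :: post)) -> valid (Node (pre ++ Leaf :: post)).
Proof. by rewrite /= !all_cat /= /nilp !size_cat /= => /andP[-> /and3P[-> _ ->]]. Qed.

Theorem mainTheorem7 (K : fieldType) (t : tree) :
  valid t -> t <> Leaf ->
  (forall u v : tree, valid u -> valid v ->
     delta_coef K t u v =
       ((u == Leaf) && (v == t))%:R + ((u == t) && (v == Leaf))%:R) ->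
  is_corolla t.
Proof.
case: t => l t_valid t_nLeaf Delta_primitive.
have [leaves | /allPn[c c_in c_nLeaf]] := boolP (all (fun c => c == Leaf) l).
  by exists l; split=> //; split=> // l_nil; apply: t_nLeaf; rewrite l_nil.
have c_valid : valid c by move: t_valid => /andP[_ /allP]; apply.
case/splitPr: c_in t_valid t_nLeaf Delta_primitive => pre post t_valid t_nLeaf Delta_primitive.
set v := Node (pre ++ Leaf :: post).
have v_nLeaf : v != Leaf by rewrite /v; case: (pre).
have pruning_cut : ([:: c], v) \in cuts (Node (pre ++ c :: post)).
  by rewrite /cuts ifN ?mem_cat ?prune_cut_mem_sub //; apply/eqP.
have := Delta_primitive c v c_valid (valid_prune t_valid).
rewrite (delta_coef_cut K _ _ c pruning_cut) Gprod1 /= eqxx (negbTE c_nLeaf) (negbTE v_nLeaf) andbF.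
by move/eqP; rewrite addr0 oner_eq0.
Qed.
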